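(* Let $(S,d)$ be a complete metric space with a Hausdorff topology $\sigma$ compatible with $d$. Let $\phi:S\to(-\infty,+\infty]$, $D(\phi)\ne\emptyset$, satisfy: there exist $A,B>0$, $u_\star\in S$ with $\phi\ge-A-Bd^2(\cdot,u_\star)$; $\sup_{n,m}d(u_n,u_m)<+\infty$, $u_n\stackrel{\sigma}{\rightharpoonup}u$ $\Rightarrow$ $\liminf_n\phi(u_n)\ge\phi(u)$; and $\sup_{n,m}\{d(u_n,u_m),\phi(u_n)\}<+\infty$ $\Rightarrow$ some subsequence of $(u_n)$ $\sigma$-converges. Let $\mathcal{P}_\epsilon:S\to(-\infty,+\infty]$ ($\epsilon>0$) satisfy $\mathcal{P}_\epsilon(\cdot)\ge-\tilde A-\tilde Bd^2(\cdot,\tilde u_\star)$ for some $\tilde A,\tilde B>0$, $\tilde u_\star\in S$, and, for every $\epsilon_n\to0$: $\sup_{n,m}d(u_n,u_m)<+\infty$, $u_n\stackrel{\sigma}{\rightharpoonup}u$ $\Rightarrow$ $\sup_n|\mathcal{P}_{\epsilon_n}(u_n)|<+\infty$. Set $\phi_\epsilon=\phi+\epsilon\mathcal{P}_\epsilon$. If $\epsilon(\tau)>0$ with $\epsilon(\tau)/\tau\to0$ as $\tau\to0$, then for all $u,u_\tau\in S$ with $u_\tau\stackrel{\sigma}{\rightharpoonup}u$ and $\sup_\tau\{\phi_{\epsilon(\tau)}(u_\tau),d(u_\tau,u)\}<+\infty$, $$\liminf_{\tau\to0}\frac{\phi_{\epsilon(\tau)}(u_\tau)-\mathcal{Y}_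\tau\phi_{\epsilon(\tau)}(u_\tau)}{\tau}\ge\frac12|\partial^-\phi|^2(u).$$
   Context: $\sigma$ compatible with $d$: if $u_n\stackrel{\sigma}{\rightharpoonup}u$, $v_n\stackrel{\sigma}{\rightharpoonup}v$ then $\liminf_n d(u_n,v_n)\ge d(u,v)$; if $d(u_n,v_n)\to0$ and $u_n\stackrel{\sigma}{\rightharpoonup}u$ then $v_n\stackrel{\sigma}{\rightharpoonup}u$. Local slope $|\partial\phi|(v)=\limsup_{w\stackrel{d}{\to}v}\frac{(\phi(v)-\phi(w))^+}{d(v,w)}$; relaxed slope $|\partial^-\phi|(u)=\inf\{\liminf_n|\partial\phi|(u_n): u_n\stackrel{\sigma}{\rightharpoonup}u,\ \sup_n\{d(u_n,u),\phi(u_n)\}<+\infty\}$; $\mathcal{Y}_\tau f(u)=\inf_{v\in S}\{f(v)+\frac1{2\tau}d^2(v,u)\}$. *)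

From HB Require Import structures.
From mathcomp Require Import all_boot all_order all_algebra.
From mathcomp Require Import all_classical all_reals all_analysis.
Set Implicit Arguments. Unset Strict Implicit. Unset Printing Implicit Defensive.
Import Order.TTheory GRing.Theory Num.Theory.
Import numFieldNormedType.Exports.
Local Open Scope classical_set_scope.
Local Open Scope ring_scope.

Section Defs.
Context {R : realType} {S : topologicalType}.
(* S carries the (Hausdorff) topology sigma; d is a separate metric on S. *)
Variable d : S -> S -> R.

Definition is_metric : Prop :=
  (forall x y, 0 <= d x y) /\ (forall x y, d x y = 0 <-> x = y) /\
  (forall x y, d x y = d y x) /\ (forall x y z, d x z <= d x y + d y z).

Definition d_cauchy (u : nat -> S) : Prop :=
  forall e : R, 0 < e -> exists N, forall n m, (N <= n)%N -> (N <= m)%N -> d (u n) (u m) < e.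

Definition d_cvg (u : nat -> S) (x : S) : Prop :=
  forall e : R, 0 < e -> exists N, forall n, (N <= n)%N -> d (u n) x < e.

Definition d_complete : Prop :=
  forall u : nat -> S, d_cauchy u -> exists x, d_cvg u x.

Definition sig_cvg (u : nat -> S) (x : S) : Prop := u @ \oo --> x.

Definition compatible : Prop :=
  (forall (u v : nat -> S) (x y : S), sig_cvg u x -> sig_cvg v y ->
     ((d x y)%:E <= limn_einf (fun n => (d (u n) (v n))%:E))%E) /\
  (forall (u v : nat -> S) (x : S),
     (fun n => d (u n) (v n)) @ \oo --> (0 : R) -> sig_cvg u x -> sig_cvg v x).

Definition d_bounded_seq (u : nat -> S) : Prop :=
  exists M : R, forall n m, d (u n) (u m) <= M.

Local Open Scope ereal_scope.

(* Local slope |\partial phi|(v) = limsup_{w -> v} (phi v - phi w)^+ / d(v,w);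
   set to +oo outside D(phi), and to 0 at d-isolated points. *)
Definition local_slope (phi : S -> \bar R) (v : S) : \bar R :=
  if phi v == +oo then +oo else
  ereal_inf [set s | exists2 r : R, (0 < r)%R &
     s = ereal_sup ([set 0] `|` [set q | exists2 w : S, (0 < d v w < r)%R &
            q = maxe (phi v - phi w) 0 * ((d v w)^-1)%:E])].

Definition relaxed_slope (phi : S -> \bar R) (u : S) : \bar R :=
  ereal_inf [set s | exists un : nat -> S,
     [/\ sig_cvg un u,
         (exists M : R, forall n, (d (un n) u <= M)%R /\ phi (un n) <= M%:E) &
         s = limn_einf (fun n => local_slope phi (un n))]].

Definition yosida (tau : R) (f : S -> \bar R) (u : S) : \bar R :=
  ereal_inf [set f v + ((d v u ^+ 2) / (2 * tau))%:E | v in [set: S]].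

End Defs.

Local Open Scope ereal_scope.
Definition liminf_right0 {R : realType} (f : R -> \bar R) : \bar R :=
  ereal_sup [set s | exists2 delta : R, (0 < delta)%R &
     s = ereal_inf [set f t | t in [set t : R | (0 < t < delta)%R]]].

From HB Require Import structures.
From mathcomp Require Import all_boot all_order all_algebra.
From mathcomp Require Import all_classical all_reals all_analysis.
From mathcomp Require Import ring lra.
Import Order.TTheory GRing.Theory Num.Theory.
Import numFieldNormedType.Exports.
Local Open Scope classical_set_scope.
Local Open Scope ring_scope.

(* Fix q in (0,1), K >= 1 and c above the liminf, and pick t_n -> 0 along which the
   rescaled Yosida gap of phi_eps at v_n = u_{t_n} stays below c.  From v_n take Yosida
   minimizers w_k of phi at the geometric scales tau_k = t_n q^k, k = 1..K.  Testing the
   minimality of w_k against w_(k+1) telescopes: for some k,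
     (d(w_k, v_n) / tau_k)^2 t_n (q - q^(K+1)) / 2
       <= phi(v_n) - phi(w_1) - d(w_1, v_n)^2 / (2 t_n),
   and the right-hand side is at most c t_n + O(eps(t_n)) since Y_(t_n) phi_eps(v_n) is at
   most the cost of w_1.  At a Yosida minimizer the local slope is at most d(w, v) / tau,
   and the selected minimizers sigma-converge to u with bounded energy, hence
   |d^- phi|^2(u) (q - q^(K+1)) <= 2 c.  Let q -> 1, K -> oo and c -> liminf. *)

Section limn_einf_bounds.
Context {R : realType}.
Implicit Types (u : (\bar R)^nat) (x : \bar R).
Local Open Scope ereal_scope.

Lemma limn_einfE u : limn_einf u = ereal_sup (range (einfs u)).
Proof. by rewrite limn_einf_lim; apply/cvg_lim => //; exact: cvg_einfs_sup. Qed.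

Lemma lt_limn_einf u x : x < limn_einf u -> exists N, forall n, (N <= n)%N -> x < u n.
Proof.
rewrite limn_einfE => /ereal_sup_gt[_ [N _ <-]] xN.
by exists N => n Nn; apply: lt_le_trans xN _; apply: ereal_inf_lbound; exists n.
Qed.

Lemma limn_einf_le u x N : (forall n, (N <= n)%N -> u n <= x) -> limn_einf u <= x.
Proof.
move=> ux; rewrite limn_einfE; apply: ge_ereal_sup => _ [M _ <-].
apply: ge_ereal_inf; exists (u (maxn N M)); last by rewrite ux ?leq_maxl.
by exists (maxn N M); rewrite /= ?leq_maxr.
Qed.

Lemma fin_seq_of_abse_le (x : (\bar R)^nat) (M : R) : (forall n, `|x n| <= M%:E) ->
  exists p : R^nat, forall n, x n = (p n)%:E /\ (`|p n| <= M)%R.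
Proof.
move=> xM; have /choice[p pP] : forall n, exists p : R, x n = p%:E /\ (`|p| <= M)%R.
  by move=> n; move: (xM n); case: (x n) => [p| |] //= pM; exists p; rewrite -lee_fin.
by exists p.
Qed.

End limn_einf_bounds.

Section real_inequalities.
Context {R : realFieldType}.
Implicit Types (a b c e x y q t : R).

Lemma sqr_le_twice_sqrD a b c : 0 <= a -> a <= b + c ->
  a ^+ 2 <= 2 * b ^+ 2 + 2 * c ^+ 2.
Proof.
move=> a0 abc; apply: (@le_trans _ _ ((b + c) ^+ 2)).
  by rewrite ler_pXn2r // nnegrE (le_trans a0).
have -> : 2 * b ^+ 2 + 2 * c ^+ 2 = (b + c) ^+ 2 + (b - c) ^+ 2 by ring.
by rewrite lerDl sqr_ge0.
Qed.

Lemma sqr_ge_of_gtB a x e : 0 <= a -> 0 <= x -> 0 < e -> a - e < x ->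
  a ^+ 2 - 2 * a * e <= x ^+ 2.
Proof.
move=> a0 x0 e0 aex; have [ae|ea] := lerP a e.
  have : a * a <= a * e by rewrite ler_wpM2l.
  have : 0 <= a * e by rewrite mulr_ge0 // ltW.
  by have := sqr_ge0 x; rewrite !expr2; lra.
have : (a - e) ^+ 2 <= x ^+ 2.
  by rewrite ler_pXn2r ?nnegrE ?subr_ge0 ?(ltW ea) ?(ltW aex).
have -> : (a - e) ^+ 2 = a ^+ 2 - 2 * a * e + e ^+ 2 by ring.
by have := sqr_ge0 e; lra.
Qed.

Lemma le_1D_of_sqr_le x c : 0 <= x -> x ^+ 2 <= c -> x <= 1 + c.
Proof.
move=> x0 xc; have [x1|x1] := lerP x 1; first by have := le_trans (sqr_ge0 x) xc; lra.
have : x <= x ^+ 2 by rewrite expr2 ler_peMr // ltW.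
lra.
Qed.

Lemma exists_weighted_le (m n : nat) (x w : R^nat) b : (m < n)%N ->
  (forall k, (m <= k < n)%N -> 0 < w k) ->
  \sum_(m <= k < n) x k * w k <= b ->
  exists2 k, (m <= k < n)%N & x k * \sum_(m <= i < n) w i <= b.
Proof.
move=> mn w0 sum_le; set W := \sum_(m <= i < n) w i.
have W0 : 0 < W.
  by have := ltr_sum_nat mn w0; rewrite big1_eq.
have [//|none] := pselect (exists2 k, (m <= k < n)%N & x k * W <= b).
have lt_k k : (m <= k < n)%N -> b * w k < x k * W * w k.
  move=> km; rewrite ltr_pM2r ?w0 // ltNge; apply/negP => le_k.
  by apply: none; exists k.
exfalso; have := ltr_sum_nat mn lt_k; rewrite -mulr_sumr -/W.
have -> : \sum_(m <= k < n) x k * W * w k = W * \sum_(m <= k < n) x k * w k.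
  by rewrite mulr_sumr; apply: eq_bigr => k _; ring.
have : W * \sum_(m <= k < n) x k * w k <= W * b by rewrite ler_pM2l.
by rewrite [b * W]mulrC; lra.
Qed.

Lemma geometric_gap_gt0 q K : 0 < q -> q < 1 -> (0 < K)%N -> 0 < q - q ^+ K.+1.
Proof.
move=> q0 q1 K0; rewrite subr_gt0 exprSr gtr_pMl //.
by rewrite exprn_ilt1 ?ltW // -lt0n.
Qed.

Lemma geometric_descent t q pv K (p D : R^nat) :
  0 < t -> 0 < q -> q < 1 -> (0 < K)%N ->
  (forall k, (1 <= k < K)%N ->
     p k + D k ^+ 2 / (2 * (t * q ^+ k)) <= p k.+1 + D k.+1 ^+ 2 / (2 * (t * q ^+ k))) ->
  p K + D K ^+ 2 / (2 * (t * q ^+ K)) <= pv ->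
  exists2 k, (1 <= k <= K)%N &
    (D k / (t * q ^+ k)) ^+ 2 * (t * (q - q ^+ K.+1) / 2)
      <= pv - (p 1%N + D 1%N ^+ 2 / (2 * t)).
Proof.
move=> t0 q0 q1 K0 step last.
pose tau k := t * q ^+ k.
have tau0 k : 0 < tau k by rewrite mulr_gt0 ?exprn_gt0.
(* [b k] is the cost of the [k]-th point at the coarser scale [tau k.-1]; [b K.+1] is [pv]. *)
pose b k := if k == K.+1 then pv else p k + D k ^+ 2 / (2 * tau k.-1).
pose w k := tau k * (1 - q) / 2.
have gap k : (1 <= k < K.+1)%N -> (D k / tau k) ^+ 2 * w k <= b k.+1 - b k.
  case: k => // k /andP[_ kK]; rewrite /b (ltn_eqF kK) /=.
  have -> : (D k.+1 / tau k.+1) ^+ 2 * w k.+1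
            = p k.+1 + D k.+1 ^+ 2 / (2 * tau k.+1) - (p k.+1 + D k.+1 ^+ 2 / (2 * tau k)).
    rewrite /w /tau (exprS q); field.
    by rewrite !gt_eqF ?mulr_gt0 ?exprn_gt0.
  rewrite lerD2r; have [kK'|eK] : (k.+1 < K)%N \/ k.+1 = K.
  - by move: kK; rewrite ltnS leq_eqVlt => /orP[/eqP->|]; [right|left].
  - by rewrite eqSS (ltn_eqF kK'); apply: step; rewrite kK'.
  - by rewrite eK eqxx.
have sum_w : \sum_(1 <= k < K.+1) w k = t * (q - q ^+ K.+1) / 2.
  have -> : \sum_(1 <= k < K.+1) w k
            = \sum_(1 <= k < K.+1) (t / 2 * ((- q ^+ k.+1) - (- q ^+ k))).
    by apply: eq_bigr => k _; rewrite /w /tau exprS; ring.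
  by rewrite -mulr_sumr telescope_sumr // expr1; ring.
have b1 : b 1%N = p 1%N + D 1%N ^+ 2 / (2 * t).
  by rewrite /b eqSS eq_sym (gtn_eqF K0) /tau expr0 mulr1.
have [k kK le_k] : exists2 k, (1 <= k < K.+1)%N &
    (D k / tau k) ^+ 2 * \sum_(1 <= i < K.+1) w i <= pv - b 1%N.
  apply: exists_weighted_le; first by rewrite ltnS.
    by move=> k _; rewrite /w divr_gt0 // mulr_gt0 // subr_gt0.
  have -> : pv = b K.+1 by rewrite /b eqxx.
  by rewrite -telescope_sumr //; apply: ler_sum_nat => k /gap.
by exists k; rewrite -?b1 -?sum_w.
Qed.

End real_inequalities.

Lemma increasing_geq (h : nat -> nat) : {homo h : n m / (n < m)%N} ->
  forall n, (n <= h n)%N.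
Proof. by move=> h_incr; elim=> // n IHn; exact: leq_ltn_trans IHn (h_incr _ _ _). Qed.

Section real_sequences.
Context {R : realType}.
Implicit Types (c e x y q : R).

Lemma exists_invn_lt e : 0 < e ->
  exists N, forall n, (N <= n)%N -> n.+1%:R^-1 < e.
Proof.
move=> e0; have /archi_boundP N_gt : 0 <= e^-1 by rewrite invr_ge0 ltW.
exists (Num.Def.archi_bound e^-1) => n Nn.
rewrite invf_plt ?posrE ?ltr0n //; apply: lt_le_trans N_gt _.
by rewrite ler_nat ltnW.
Qed.

Lemma cvg0_sqr_le_invn (f : R^nat) c : (forall n, 0 <= f n) ->
  (forall n, f n ^+ 2 <= c / n.+1%:R) -> f @ \oo --> 0.
Proof.
move=> f0 fc; apply/cvgrPdist_lt => e e0.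
pose c' := Num.max c 0; have c'0 : 0 <= c' by rewrite le_max lexx orbT.
have e20 : 0 < e ^+ 2 by rewrite exprn_gt0.
have /archi_boundP N_gt : 0 <= c' / e ^+ 2 by rewrite divr_ge0 // ltW.
exists (Num.Def.archi_bound (c' / e ^+ 2)) => // n /= Nn.
rewrite sub0r normrN ger0_norm // -(ltr_pXn2r (n := 2)) ?nnegrE ?(ltW e0) //.
apply: le_lt_trans (fc n) _; apply: (@le_lt_trans _ _ (c' / n.+1%:R)).
  by rewrite ler_pM2r ?invr_gt0 ?ltr0n // le_max lexx.
rewrite ltr_pdivrMr ?ltr0n // mulrC -ltr_pdivrMr //.
by apply: lt_le_trans N_gt _; rewrite ler_nat ltnW.
Qed.

Lemma cvg_at_right0_seq (T : topologicalType) (g : R -> T) (t : R^nat) (l : T) :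
  g @ at_right 0 --> l -> (forall n, 0 < t n) -> t @ \oo --> 0 ->
  (g \o t) @ \oo --> l.
Proof.
move=> gl t0 tcvg; apply: cvg_comp gl => A At.
have : \forall n \near \oo, 0 < t n -> A (t n) := tcvg _ At.
by apply: filterS => n; apply.
Qed.

Lemma cvg0_le_invn (f : R^nat) : (forall n, 0 < f n <= n.+1%:R^-1) -> f @ \oo --> 0.
Proof.
move=> f_inv; apply: (@cvg0_sqr_le_invn _ 1) => n; first by case/andP: (f_inv n) => /ltW.
case/andP: (f_inv n) => f0 f_le; rewrite mul1r expr2; apply: (le_trans _ f_le).
rewrite ler_piMl ?(ltW f0) //; apply: le_trans f_le _.
by rewrite invf_le1 ?ltr0n // ler1n.
Qed.

Lemma liminf_right0_lt_seq (F : R -> \bar R) (Q : nat -> R -> Prop) (c : R) :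
  (liminf_right0 F < c%:E)%E ->
  (forall n, exists2 delta, 0 < delta & forall t, 0 < t < delta -> Q n t) ->
  exists t : R^nat, forall n,
    [/\ 0 < t n, t n < n.+1%:R^-1, Q n (t n) & (F (t n) < c%:E)%E].
Proof.
move=> Fc Qn; have /choice[t tP] : forall n, exists t, [/\ 0 < t, t < n.+1%:R^-1, Q n t
    & (F t < c%:E)%E]; last by exists t.
move=> n; have [de de0 deQ] := Qn n.
have del0 : 0 < Num.min n.+1%:R^-1 de by rewrite lt_min de0 invr_gt0 ltr0n.
have : (ereal_inf [set F t | t in [set t | (0 < t < Num.min n.+1%:R^-1 de)%R]] < c%:E)%E.
  by apply: le_lt_trans Fc; apply: ereal_sup_ubound; exists (Num.min n.+1%:R^-1 de).
move=> /ereal_inf_lt[_ [t /andP[t0 tdel] <-] Ft].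
move: tdel; rewrite lt_min => /andP[t_inv t_de].
by exists t; split => //; apply: deQ; rewrite t0.
Qed.

Lemma geometric_gap_ge e : 0 < e -> e <= 1 ->
  exists q K, [/\ 0 < q, q < 1, (0 < K)%N & 1 - e <= q - q ^+ K.+1].
Proof.
move=> e0 e1; pose q := 1 - e / 2.
have q0 : 0 < q by rewrite /q; lra.
have q1 : q < 1 by rewrite /q; lra.
have : (GRing.exp q) @ \oo --> 0 by apply: cvg_expr; rewrite ger0_norm ?ltW.
have e20 : 0 < e / 2 by rewrite divr_gt0.
move=> /cvgrPdist_lt /(_ (e / 2) e20) [N _ qN].
exists q, N.+1; split => //.
have qNe : q ^+ N.+1 < e / 2.
  by have := qN N.+1 (leqnSn N); rewrite /= sub0r normrN; apply: le_lt_trans (ler_norm _).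
have -> : q - q ^+ N.+2 = q * (1 - q ^+ N.+1) by rewrite [q ^+ N.+2]exprS; ring.
have : q * q <= q * (1 - q ^+ N.+1) by rewrite ler_pM2l // /q; lra.
have -> : q * q = 1 - e + (e / 2) ^+ 2 by rewrite /q; field.
by have := sqr_ge0 (e / 2); lra.
Qed.

Lemma le_of_geometric_gap x y : 0 <= x ->
  (forall q K, 0 < q -> q < 1 -> (0 < K)%N -> x * (q - q ^+ K.+1) <= y) -> x <= y.
Proof.
move=> x0 xy; apply/ler_addgt0Pr => e e0.
pose g := Num.min 1 (e / (x + 1)).
have x10 : 0 < x + 1 by lra.
have g0 : 0 < g by rewrite lt_min ltr01 divr_gt0.
have g1 : g <= 1 by rewrite ge_min lexx.
have xg : x * g <= e.
  apply: (@le_trans _ _ (x * (e / (x + 1)))); first by rewrite ler_wpM2l // ge_min lexx orbT.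
  by rewrite mulrA ler_pdivrMr //; nra.
have [q [K [q0 q1 K0 gap]]] := @geometric_gap_ge g g0 g1.
have := xy q K q0 q1 K0.
have : x * (1 - g) <= x * (q - q ^+ K.+1) by rewrite ler_wpM2l.
lra.
Qed.

End real_sequences.

Section half_square.
Context {R : realType}.
Local Open Scope ereal_scope.

Lemma half_sqr_le (s L : \bar R) : 0 <= s ->
  (forall (q : R) K (c e : R), (0 < q)%R -> (q < 1)%R -> (0 < K)%N -> L < c%:E -> (0 < e)%R ->
     exists2 a : R, s <= a%:E & (a ^+ 2 * (q - q ^+ K.+1) <= 2 * c + e)%R) ->
  2^-1%:E * (s * s) <= L.
Proof.
move=> s0 sL.
have half0 : (0 < 2^-1 :> R)%R by rewrite invr_gt0.
have half1 : (2^-1 < 1 :> R)%R by rewrite invf_lt1 ?ltr1n.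
have fin_s c : L < c%:E -> exists x, s = x%:E.
  move=> Lc; have [a sa _] := sL _ 1%N c 1%R half0 half1 isT Lc ltr01.
  by move: s0 sa {sL}; case: s => // x; exists x.
have key c x : L < c%:E -> s = x%:E -> (x ^+ 2 <= 2 * c)%R.
  move=> Lc sx; apply: le_of_geometric_gap; first exact: sqr_ge0.
  move=> q K q0 q1 K0; apply/ler_addgt0Pr => e e0.
  have [a sa aQ] := sL q K c e q0 q1 K0 Lc e0.
  apply: le_trans aQ; rewrite ler_pM2r ?geometric_gap_gt0 //.
  move: s0 sa; rewrite sx !lee_fin => x0 xa.
  by rewrite ler_pXn2r ?nnegrE // (le_trans x0).
case: L sL fin_s key => [l| |] sL fin_s key; last 2 first.
- by rewrite leey.
- have [x sx] := fin_s (-1)%R (ltNyr _).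
  by exfalso; have := key (-1)%R x (ltNyr _) sx; have := sqr_ge0 x; lra.
have lD e : (0 < e)%R -> l%:E < (l + e)%:E by move=> e0; rewrite lte_fin ltrDl.
have [x sx] := fin_s _ (lD _ ltr01).
rewrite sx -EFinM lee_fin; apply/ler_addgt0Pr => e e0.
have := key _ x (lD _ e0) sx.
by rewrite -expr2; lra.
Qed.

End half_square.

Section relaxed_slope_yosida.
Context {R : realType} {S : topologicalType}.
Variables (d : S -> S -> R) (phi : S -> \bar R).
Hypothesis d_metric : is_metric d.
Hypothesis phi_gtNy : forall x, phi x != -oo%E.

Lemma d_ge0 x y : 0 <= d x y. Proof. by case: d_metric. Qed.
Lemma d_sym x y : d x y = d y x. Proof. by case: d_metric => _ [_ []]. Qed.
Lemma d_triangle x y z : d x z <= d x y + d y z. Proof. by case: d_metric => _ [_ [_]]. Qed.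
Lemma d_xx x : d x x = 0. Proof. by case: d_metric => _ [dP _]; apply/dP. Qed.

Lemma d_bounded_seq_ball (un : nat -> S) x M : (forall n, d (un n) x <= M) ->
  d_bounded_seq d un.
Proof.
move=> uM; exists (2 * M) => n m; apply: le_trans (d_triangle _ x _) _.
by rewrite (d_sym x); have := uM n; have := uM m; lra.
Qed.

Definition yosida_cost v r z := (phi z + (d z v ^+ 2 / (2 * r))%:E)%E.

Definition yosida_minimizer v r w := forall z, (yosida_cost v r w <= yosida_cost v r z)%E.

Lemma yosida_cost_id v r : yosida_cost v r v = phi v.
Proof. by rewrite /yosida_cost d_xx expr0n /= mul0r adde0. Qed.

Lemma local_slope_yosida_minimizer v r w : 0 < r -> yosida_minimizer v r w ->
  phi w != +oo%E -> (local_slope d phi w <= (d w v / r)%:E)%E.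
Proof.
move=> r0 w_min wfin; rewrite /local_slope (negbTE wfin).
have [pw Ew] : exists pw, phi w = pw%:E.
  by move: (phi_gtNy w) wfin; case: (phi w) => // x; exists x.
set D := d w v; have D0 : 0 <= D := d_ge0 _ _.
have r2 : 0 < 2 * r by rewrite mulr_gt0.
apply/lee_addgt0Pr => eta eta0; apply: ge_ereal_inf.
eexists; first by exists (2 * r * eta) => //; rewrite !mulr_gt0.
apply: ge_ereal_sup => _ [->|[z /andP[z0 zr] ->]].
  by rewrite -EFinD lee_fin addr_ge0 ?divr_ge0 // ltW.
rewrite Ew; case Ez: (phi z) => [pz| |]; last by move: (phi_gtNy z); rewrite Ez.
  rewrite -EFinB -EFin_max -EFinM -EFinD lee_fin ler_pdivrMr // ge_max.
  apply/andP; split; last by rewrite mulr_ge0 ?addr_ge0 ?divr_ge0 // ltW.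
  set de := d w z in z0 zr *.
  (* Testing minimality against [z]:
     2 r (pw - pz) <= d(z,v)^2 - D^2 <= de^2 + 2 de D, and de < 2 r eta. *)
  have min_z : 2 * r * pw + D ^+ 2 <= 2 * r * pz + d z v ^+ 2.
    have := w_min z; rewrite /yosida_cost Ew Ez -!EFinD lee_fin -(ler_pM2l r2) !mulrDr.
    by rewrite ![2 * r * (_ / _)]mulrC !divfK ?gt_eqF.
  have dz : d z v ^+ 2 <= de ^+ 2 + 2 * de * D + D ^+ 2.
    have -> : de ^+ 2 + 2 * de * D + D ^+ 2 = (de + D) ^+ 2 by ring.
    rewrite ler_pXn2r ?nnegrE ?d_ge0 ?addr_ge0 ?(ltW z0) //.
    by apply: le_trans (d_triangle z w v) _; rewrite [d z w]d_sym.
  have de_small : de ^+ 2 <= 2 * r * eta * de by rewrite expr2 ler_pM2r // ltW.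
  rewrite -(ler_pM2l r2).
  have -> : 2 * r * ((D / r + eta) * de) = 2 * D * de + 2 * r * eta * de.
    by field; rewrite gt_eqF.
  lra.
by rewrite /= maxNye mul0e -EFinD lee_fin addr_ge0 ?divr_ge0 // ltW.
Qed.

Lemma local_slope_ge0 w : (0 <= local_slope d phi w)%E.
Proof.
rewrite /local_slope; case: ifP => _; first by rewrite le0y.
by apply: le_ereal_inf_tmp => _ [r r0 ->]; apply: ereal_sup_ubound; left.
Qed.

Lemma relaxed_slope_ge0 x : (0 <= relaxed_slope d phi x)%E.
Proof.
apply: le_ereal_inf_tmp => _ [un [_ _ ->]]; rewrite limn_einfE.
apply: (@le_trans _ _ (einfs (fun n => local_slope d phi (un n)) 0%N)).
  by apply: le_ereal_inf_tmp => _ [k _ <-]; exact: local_slope_ge0.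
by apply: ereal_sup_ubound; exists 0%N.
Qed.

Lemma relaxed_slope_le_sqrt u (wn : nat -> S) (a : R^nat) M Q b beta e :
  sig_cvg wn u -> (forall n, d (wn n) u <= M /\ (phi (wn n) <= M%:E)%E) ->
  (forall n, (local_slope d phi (wn n) <= (a n)%:E)%E) -> (forall n, 0 <= a n) ->
  0 < Q -> 0 <= beta -> (forall n, a n ^+ 2 * Q <= b + beta / n.+1%:R) -> 0 < e ->
  exists2 a' : R, (relaxed_slope d phi u <= a'%:E)%E & a' ^+ 2 * Q <= b + e.
Proof.
move=> wu wM wa a0 Q0 beta0 aQ e0.
have [N invN] := exists_invn_lt _ (divr_gt0 e0 (ltr_wpDl beta0 ltr01)).
have aN n : (N <= n)%N -> a n ^+ 2 <= (b + e) / Q.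
  move=> Nn; rewrite ler_pdivlMr //; apply: le_trans (aQ n) _; rewrite lerD2l.
  have := invN n Nn; rewrite ltr_pdivlMr ?ltr_wpDl // => lt_e.
  by rewrite mulrC; apply: ltW; apply: le_lt_trans lt_e; rewrite mulrDr mulr1 lerDl invr_ge0.
have be0 : 0 <= (b + e) / Q := le_trans (sqr_ge0 _) (aN N (leqnn N)).
exists (Num.sqrt ((b + e) / Q)); last by rewrite sqr_sqrtr // divfK ?gt_eqF.
apply: le_trans (_ : limn_einf (fun n => local_slope d phi (wn n)) <= _)%E.
  by apply: ereal_inf_lbound; exists wn; split => //; exists M.
apply: (@limn_einf_le _ _ _ N) => n Nn; apply: le_trans (wa n) _.
by rewrite lee_fin -(ger0_norm (a0 n)) -sqrtr_sqr ler_wsqrtr // aN.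
Qed.

Lemma sig_cvg_d_sqr_le_invn (vn wn : nat -> S) u c : compatible d -> sig_cvg vn u ->
  (forall n, d (wn n) (vn n) ^+ 2 <= c / n.+1%:R) -> sig_cvg wn u.
Proof.
move=> d_compat vu wv; apply: d_compat.2 vu.
by apply: (@cvg0_sqr_le_invn _ _ c) => n; rewrite ?d_ge0 // d_sym.
Qed.

Variables (A B : R) (ustar : S).
Hypothesis B_gt0 : 0 < B.
Hypothesis phi_ge : forall x, ((- A - B * d x ustar ^+ 2)%:E <= phi x)%E.

(* For [8 B r <= 1] the penalty [d z v ^+ 2 / (2 r)] dominates the quadratic decay of [phi]
   with half of itself to spare. *)
Lemma yosida_cost_ge v r z : 0 < r -> r * (8 * B) <= 1 ->
  ((- A - 2 * B * d v ustar ^+ 2 + d z v ^+ 2 / (4 * r))%:E <= yosida_cost v r z)%E.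
Proof.
move=> r0 rB; apply: le_trans (leeD2r _ (phi_ge z)); rewrite -EFinD lee_fin.
have dzu := sqr_le_twice_sqrD _ _ _ (d_ge0 z ustar) (d_triangle z v ustar).
set X := d z v ^+ 2 in dzu *; have X0 : 0 <= X := sqr_ge0 _.
have BX : 2 * B * X <= X / (4 * r).
  rewrite ler_pdivlMr ?mulr_gt0 //.
  have -> : 2 * B * X * (4 * r) = X * (r * (8 * B)) by ring.
  by rewrite ler_piMr.
have -> : X / (2 * r) = X / (4 * r) + X / (4 * r) by field; rewrite gt_eqF.
have : B * d z ustar ^+ 2 <= B * (2 * X + 2 * d v ustar ^+ 2) by rewrite ler_pM2l.
lra.
Qed.

Lemma yosida_sublevel v r z M : 0 < r -> r * (8 * B) <= 1 ->
  (yosida_cost v r z <= M%:E)%E ->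
  d z v ^+ 2 <= 4 * r * (M + A + 2 * B * d v ustar ^+ 2) /\ (phi z <= M%:E)%E.
Proof.
move=> r0 rB zM; split.
  have := le_trans (yosida_cost_ge v r z r0 rB) zM; rewrite lee_fin => le_M.
  rewrite -ler_pdivrMl ?mulr_gt0 // mulrC; lra.
apply: le_trans zM; rewrite /yosida_cost leeDl // lee_fin.
by rewrite divr_ge0 ?sqr_ge0 // mulr_ge0 // ltW.
Qed.

Hypothesis phi_lsc : forall (un : nat -> S) (x : S), d_bounded_seq d un -> sig_cvg un x ->
  (phi x <= limn_einf (fun n => phi (un n)))%E.
Hypothesis phi_cpt : forall un : nat -> S,
  (exists M : R, forall n m, d (un n) (un m) <= M /\ (phi (un n) <= M%:E)%E) ->
  exists (h : nat -> nat) (x : S), {homo h : n m / (n < m)%N} /\ sig_cvg (un \o h) x.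
Hypothesis d_compat : compatible d.

Lemma yosida_cost_le_of_eventually v r (zn : nat -> S) w y : 0 < r ->
  d_bounded_seq d zn -> sig_cvg zn w ->
  (forall e, 0 < e -> exists N, forall n, (N <= n)%N ->
     (yosida_cost v r (zn n) <= (y + e)%:E)%E) ->
  (yosida_cost v r w <= y%:E)%E.
Proof.
move=> r0 zb zw zy.
have phi_w := phi_lsc _ _ zb zw.
have d_w : ((d w v)%:E <= limn_einf (fun n => (d (zn n) v)%:E))%E.
  exact: d_compat.1 _ (fun=> v) _ _ zw (cvg_cst v).
have [pw Ew] : exists pw, phi w = pw%:E.
  have [N zN] := zy 1 ltr01.
  have : (phi w <= (y + 1)%:E)%E.
    apply: le_trans phi_w _; apply: (@limn_einf_le _ _ _ N) => n /zN; apply: le_trans.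
    by rewrite /yosida_cost leeDl // lee_fin divr_ge0 ?sqr_ge0 // mulr_ge0 // ltW.
  by move: (phi_gtNy w); case: (phi w) => // x; exists x.
rewrite /yosida_cost Ew -EFinD lee_fin.
set de := d w v in d_w *; set c := (2 * r)^-1.
have c0 : 0 < c by rewrite invr_gt0 mulr_gt0.
have de0 : 0 <= de := d_ge0 _ _.
have near_w eta : 0 < eta -> pw + de ^+ 2 * c <= y + eta * (2 + 2 * de * c).
  move=> eta0; have [N0 zN0] := zy eta eta0.
  have [N1 phiN1] : exists N, forall n, (N <= n)%N -> ((pw - eta)%:E < phi (zn n))%E.
    by apply: lt_limn_einf; apply: (lt_le_trans _ phi_w); rewrite Ew lte_fin; lra.
  have [N2 dN2] : exists N, forall n, (N <= n)%N -> ((de - eta)%:E < (d (zn n) v)%:E)%E.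
    by apply: lt_limn_einf; apply: (lt_le_trans _ d_w); rewrite lte_fin; lra.
  pose n := (N0 + N1 + N2)%N.
  have := zN0 n (leq_trans (leq_addr N1 N0) (leq_addr N2 _)).
  have := phiN1 n (leq_trans (leq_addl N0 N1) (leq_addr N2 _)).
  have := dN2 n (leq_addl _ _); rewrite lte_fin => /(sqr_ge_of_gtB _ _ _ de0 (d_ge0 _ _) eta0).
  rewrite /yosida_cost; case: (phi (zn n)) => [pz| |] dn phin zn_le; [|done|done].
  rewrite lte_fin in phin; rewrite -EFinD lee_fin -/c in zn_le.
  have : (de ^+ 2 - 2 * de * eta) * c <= d (zn n) v ^+ 2 * c by rewrite ler_pM2r.
  move: zn_le; move: (d (zn n) v ^+ 2 * c) => X.
  have -> : (de ^+ 2 - 2 * de * eta) * c = de ^+ 2 * c - 2 * (de * eta * c) by ring.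
  have -> : eta * (2 + 2 * de * c) = 2 * eta + 2 * (de * eta * c) by ring.
  lra.
apply/ler_addgt0Pr => e e0.
have dec0 : 0 <= 2 * de * c by rewrite !mulr_ge0 // ltW.
have k0 : 0 < 2 + 2 * de * c by lra.
by have := near_w _ (divr_gt0 e0 k0); rewrite divfK ?gt_eqF.
Qed.

Lemma yosida_minimizer_exists v r : 0 < r -> r * (8 * B) <= 1 -> phi v != +oo%E ->
  exists w, yosida_minimizer v r w.
Proof.
move=> r0 rB vfin; set m := ereal_inf (range (yosida_cost v r)).
have [mu Em] : exists mu, m = mu%:E.
  have m_le : (m <= phi v)%E by apply: ereal_inf_lbound; exists v; rewrite ?yosida_cost_id.
  have m_ge : ((- A - 2 * B * d v ustar ^+ 2)%:E <= m)%E.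
    apply: le_ereal_inf_tmp => _ [z _ <-]; apply: le_trans (yosida_cost_ge v r z r0 rB).
    by rewrite lee_fin lerDl divr_ge0 ?sqr_ge0 // mulr_ge0 // ltW.
  move: m_le m_ge; case: m => [mu _ _| |]; first by exists mu.
    by rewrite leye_eq (negbTE vfin).
  by [].
have /choice[z z_lt] : forall n : nat, exists z,
    (yosida_cost v r z < (mu + n.+1%:R^-1)%:E)%E.
  move=> n; have : (m < (mu + n.+1%:R^-1)%:E)%E by rewrite Em lte_fin ltrDl invr_gt0 ltr0n.
  by move=> /ereal_inf_lt[_ [z _ <-]]; exists z.
have z_le n : (yosida_cost v r (z n) <= (mu + 1)%:E)%E.
  by apply/ltW/(lt_le_trans (z_lt n)); rewrite lee_fin lerD2l invf_le1 ?ltr0n // ler1n.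
pose C := 1 + 4 * r * (mu + 1 + A + 2 * B * d v ustar ^+ 2).
have zC n : d (z n) v <= C.
  exact: le_1D_of_sqr_le (d_ge0 _ _) (yosida_sublevel _ _ _ _ r0 rB (z_le n)).1.
have [h [w [h_incr zw]]] : exists (h : nat -> nat) (x : S),
    {homo h : n m / (n < m)%N} /\ sig_cvg (z \o h) x.
  apply: phi_cpt; exists (Num.max (2 * C) (mu + 1)) => n k; split.
    rewrite le_max; apply/orP; left; apply: le_trans (d_triangle _ v _) _.
    by rewrite (d_sym v); have := zC n; have := zC k; lra.
  apply: le_trans (yosida_sublevel _ _ _ _ r0 rB (z_le n)).2 _.
  by rewrite lee_fin le_max lexx orbT.
exists w => x; apply: (@le_trans _ _ m); last by apply: ereal_inf_lbound; exists x.
rewrite Em; apply: (@yosida_cost_le_of_eventually v r (z \o h) w mu r0) => //.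
  by apply: (@d_bounded_seq_ball _ v C) => n; exact: zC.
move=> e e0; have [N invN] := exists_invn_lt _ e0; exists N => n Nn.
apply/ltW/(lt_le_trans (z_lt (h n))); rewrite lee_fin lerD2l.
apply: ltW; apply: le_lt_trans (invN n Nn).
by rewrite lef_pV2 ?posrE ?ltr0n // ler_nat ltnS (increasing_geq _ h_incr).
Qed.

Lemma yosida_minimizers_along (vn : nat -> S) (tn : R^nat) u q M M0 :
  sig_cvg vn u -> (forall n, d (vn n) u <= M0) -> (forall n, (phi (vn n) <= M%:E)%E) ->
  (forall n, 0 < tn n) -> (forall n, tn n <= n.+1%:R^-1) ->
  (forall n, tn n * (8 * B) <= 1) -> 0 < q -> q < 1 ->
  exists W : nat -> nat -> S,
    (forall n k, yosida_minimizer (vn n) (tn n * q ^+ k) (W n k)) /\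
    forall kk : nat -> nat, sig_cvg (fun n => W n (kk n)) u /\
      exists M', forall n, d (W n (kk n)) u <= M' /\ (phi (W n (kk n)) <= M'%:E)%E.
Proof.
move=> vu vM0 vM t0 t_inv tB q0 q1.
have tau0 n k : 0 < tn n * q ^+ k by rewrite mulr_gt0 // exprn_gt0.
have tau_le n k : tn n * q ^+ k <= tn n.
  by rewrite ler_piMr ?(ltW (t0 n)) // exprn_ile1 ?(ltW q0) ?(ltW q1).
have /choice[W W_min] : forall n, exists Wn : nat -> S,
    forall k, yosida_minimizer (vn n) (tn n * q ^+ k) (Wn k).
  move=> n; have /choice[Wn Wn_min] : forall k, exists w,
      yosida_minimizer (vn n) (tn n * q ^+ k) w; last by exists Wn.
  move=> k; apply: yosida_minimizer_exists => //.
    by apply: le_trans (tB n); rewrite ler_pM2r ?mulr_gt0 ?tau_le.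
  by move: (vM n); case: (phi (vn n)).
exists W; split => // kk.
have M00 : 0 <= M0 := le_trans (d_ge0 _ _) (vM0 0%N).
pose C := M + A + 2 * B * (M0 + d u ustar) ^+ 2.
have W_near n k : d (W n k) (vn n) ^+ 2 <= 4 * C / n.+1%:R /\ (phi (W n k) <= M%:E)%E.
  have W_le : (yosida_cost (vn n) (tn n * q ^+ k) (W n k) <= M%:E)%E.
    by apply: le_trans (W_min n k (vn n)) _; rewrite yosida_cost_id.
  have tauB : tn n * q ^+ k * (8 * B) <= 1.
    by apply: le_trans (tB n); rewrite ler_pM2r ?mulr_gt0 ?tau_le.
  have [dW ->] := yosida_sublevel _ _ _ _ (tau0 n k) tauB W_le; split => //.
  have Cn0 : 0 <= M + A + 2 * B * d (vn n) ustar ^+ 2.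
    by have := le_trans (sqr_ge0 _) dW; rewrite -mulrA pmulr_rge0 // pmulr_rge0.
  have Cn : M + A + 2 * B * d (vn n) ustar ^+ 2 <= C.
    rewrite /C lerD2l ler_pM2l ?mulr_gt0 // ler_pXn2r ?nnegrE ?d_ge0 ?addr_ge0 ?d_ge0 //.
    by apply: le_trans (d_triangle _ u _) _; rewrite lerD2r.
  apply: le_trans dW _.
  have -> : 4 * C / n.+1%:R = 4 * (n.+1%:R^-1 * C) by ring.
  rewrite -mulrA ler_pM2l // ler_pM ?(ltW (tau0 n k)) //.
  exact: le_trans (tau_le n k) (t_inv n).
have C0 : 0 <= C.
  have := le_trans (sqr_ge0 _) (W_near 0%N 0%N).1.
  by rewrite invr1 mulr1 pmulr_rge0.
split.
  apply: (sig_cvg_d_sqr_le_invn _ _ _ (4 * C) d_compat vu) => n.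
  exact: (W_near n (kk n)).1.
exists (Num.max (1 + 4 * C + M0) M) => n; split; last first.
  by apply: le_trans (W_near n (kk n)).2 _; rewrite lee_fin le_max lexx orbT.
rewrite le_max; apply/orP; left; apply: le_trans (d_triangle _ (vn n) _) _.
rewrite lerD ?vM0 //; apply: le_1D_of_sqr_le; first exact: d_ge0.
apply: le_trans (W_near n (kk n)).1 _.
by rewrite ler_pdivrMr ?ltr0n // ler_peMr ?mulr_ge0 // ler1n.
Qed.

Variables (P : R -> S -> \bar R) (eps : R -> R).

Definition phi_eps e x := (phi x + e%:E * P e x)%E.

Lemma yosida_gap_descent v t e q K c (W : nat -> S) pv p0 p1 :
  0 < t -> 0 < e -> 0 < q -> q < 1 -> (0 < K)%N ->
  phi v = pv%:E -> P e v = p0%:E -> P e (W 1%N) = p1%:E ->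
  (forall k, yosida_minimizer v (t * q ^+ k) (W k)) ->
  ((phi_eps e v - yosida d t (phi_eps e) v) * t^-1%:E < c%:E)%E ->
  exists2 k, (1 <= k <= K)%N & (d (W k) v / (t * q ^+ k)) ^+ 2 * (q - q ^+ K.+1)
    <= 2 * c + 2 * (e / t) * (`|p0| + `|p1|).
Proof.
move=> t0 e0 q0 q1 K0 Ev Ep0 Ep1 W_min gap_c.
have /choice[pW EW] : forall k, exists p, phi (W k) = p%:E.
  move=> k; have : (phi (W k) <= pv%:E)%E.
    apply: le_trans (_ : yosida_cost v (t * q ^+ k) (W k) <= _)%E.
      by rewrite leeDl // lee_fin divr_ge0 ?sqr_ge0 // mulr_ge0 // ltW ?mulr_gt0 ?exprn_gt0.
    by rewrite -Ev -(yosida_cost_id v (t * q ^+ k)); exact: W_min.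
  by move: (phi_gtNy (W k)); case: (phi (W k)) => // p; exists p.
have cost k r : yosida_cost v r (W k) = (pW k + d (W k) v ^+ 2 / (2 * r))%:E.
  by rewrite /yosida_cost EW.
have [k kK descent] : exists2 k, (1 <= k <= K)%N &
    (d (W k) v / (t * q ^+ k)) ^+ 2 * (t * (q - q ^+ K.+1) / 2)
      <= pv - (pW 1%N + d (W 1%N) v ^+ 2 / (2 * t)).
  apply: geometric_descent => // [k _|].
    by have := W_min k (W k.+1); rewrite !cost lee_fin.
  by have := W_min K v; rewrite cost yosida_cost_id Ev lee_fin.
exists k => //.
have Y_le : (yosida d t (phi_eps e) v <= (pW 1%N + e * p1 + d (W 1%N) v ^+ 2 / (2 * t))%:E)%E.
  by apply: ereal_inf_lbound; exists (W 1%N) => //; rewrite /phi_eps EW Ep1 -EFinM -!EFinD.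
move: gap_c Y_le; rewrite /phi_eps Ev Ep0 -EFinM -EFinD.
case: (yosida d t _ v) => [y| |] //; last first.
  by rewrite /= mulyr gtr0_sg ?invr_gt0 // mul1e.
rewrite -EFinB -EFinM !lte_fin lee_fin ltr_pdivrMr // => gap_y Y_y.
set X := (d (W k) v / (t * q ^+ k)) ^+ 2 in descent *.
have t2 : 0 < t / 2 by rewrite divr_gt0.
rewrite -(ler_pM2l t2).
have -> : t / 2 * (X * (q - q ^+ K.+1)) = X * (t * (q - q ^+ K.+1) / 2) by ring.
have -> : t / 2 * (2 * c + 2 * (e / t) * (`|p0| + `|p1|)) = c * t + e * (`|p0| + `|p1|).
  by field; rewrite gt_eqF.
have : - (e * p0) <= e * `|p0| by rewrite -mulrN ler_wpM2l ?(ltW e0) // -normrN ler_norm.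
have : e * p1 <= e * `|p1| by rewrite ler_wpM2l ?(ltW e0) // ler_norm.
lra.
Qed.

Lemma phi_le_of_phi_eps_le x e p M M1 : 0 < e -> e <= 1 -> P e x = p%:E -> `|p| <= M1 ->
  (phi_eps e x <= M%:E)%E -> exists2 r, phi x = r%:E & r <= M + M1.
Proof.
move=> e0 e1 Ep pM1; rewrite /phi_eps Ep -EFinM.
case: (phi x) (phi_gtNy x) => [r| |] //= _; rewrite -EFinD lee_fin => rM.
exists r => //.
have : e * - p <= e * `|p| by rewrite ler_wpM2l ?(ltW e0) // -normrN ler_norm.
have : e * `|p| <= `|p| by rewrite ler_piMl.
lra.
Qed.

Hypothesis P_bnd : forall (en : nat -> R) (un : nat -> S) (x : S),
  (forall n, 0 < en n) -> en @ \oo --> (0 : R) -> d_bounded_seq d un -> sig_cvg un x ->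
  exists M : R, forall n, (`| P (en n) (un n) | <= M%:E)%E.

Lemma relaxed_slope_estimate_seq (vn : nat -> S) (tn en : R^nat) u M0 q K c e :
  sig_cvg vn u -> (forall n, d (vn n) u <= M0) ->
  (forall n, 0 < tn n) -> (forall n, tn n <= n.+1%:R^-1) -> (forall n, tn n * (8 * B) <= 1) ->
  (forall n, 0 < en n) -> (forall n, en n <= 1) -> en @ \oo --> 0 ->
  (forall n, en n / tn n <= n.+1%:R^-1) ->
  (forall n, (phi_eps (en n) (vn n) <= M0%:E)%E) ->
  (forall n, ((phi_eps (en n) (vn n) - yosida d (tn n) (phi_eps (en n)) (vn n))
               * (tn n)^-1%:E < c%:E)%E) ->
  0 < q -> q < 1 -> (0 < K)%N -> 0 < e ->
  exists2 a : R, (relaxed_slope d phi u <= a%:E)%E & a ^+ 2 * (q - q ^+ K.+1) <= 2 * c + e.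
Proof.
move=> v_u v_M0 t0 t_inv tB e_pos e1 e_cvg e_t phie_M0 gap q0 q1 K0 e0.
have [M1 /fin_seq_of_abse_le[p0 p0P]] :=
  P_bnd _ _ _ e_pos e_cvg (d_bounded_seq_ball _ _ _ v_M0) v_u.
have /choice[pv pvP] : forall n, exists r, phi (vn n) = r%:E /\ r <= M0 + M1.
  move=> n; have [r] := phi_le_of_phi_eps_le _ _ _ _ _ (e_pos n) (e1 n) (p0P n).1 (p0P n).2
    (phie_M0 n).
  by exists r.
have v_phi n : (phi (vn n) <= (M0 + M1)%:E)%E by rewrite (pvP n).1 lee_fin (pvP n).2.
have [W [W_min W_diag]] :=
  yosida_minimizers_along _ _ _ _ _ _ v_u v_M0 v_phi t0 t_inv tB q0 q1.
have [w1_u [Mw1 w1_bnd]] := W_diag (fun=> 1%N).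
have [M2 /fin_seq_of_abse_le[p1 p1P]] :=
  P_bnd _ _ _ e_pos e_cvg (d_bounded_seq_ball _ _ _ (fun n => (w1_bnd n).1)) w1_u.
have /choice[kk kkP] : forall n, exists k,
    (d (W n k) (vn n) / (tn n * q ^+ k)) ^+ 2 * (q - q ^+ K.+1)
      <= 2 * c + 2 * (en n / tn n) * (`|p0 n| + `|p1 n|).
  move=> n; have [k _ le_k] := yosida_gap_descent _ _ _ _ _ _ _ _ _ _ (t0 n) (e_pos n)
    q0 q1 K0 (pvP n).1 (p0P n).1 (p1P n).1 (W_min n) (gap n).
  by exists k.
have [wu [M' wM]] := W_diag kk.
have M10 : 0 <= M1 := le_trans (normr_ge0 _) (p0P 0%N).2.
have M20 : 0 <= M2 := le_trans (normr_ge0 _) (p1P 0%N).2.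
apply: (relaxed_slope_le_sqrt _ _ (fun n => d (W n (kk n)) (vn n) / (tn n * q ^+ kk n)) _ _ _
  (2 * (M1 + M2)) _ wu wM) => //.
- move=> n; apply: local_slope_yosida_minimizer (W_min n (kk n)) _.
    by rewrite mulr_gt0 ?exprn_gt0.
  by move: (wM n).2; case: (phi _).
- by move=> n; rewrite divr_ge0 ?d_ge0 // ltW // mulr_gt0 ?exprn_gt0.
- exact: geometric_gap_gt0.
- by rewrite mulr_ge0 ?addr_ge0.
move=> n; apply: le_trans (kkP n) _; rewrite lerD2l.
have -> : 2 * (M1 + M2) / n.+1%:R = 2 * (n.+1%:R^-1 * (M1 + M2)) by ring.
rewrite -mulrA ler_pM2l // ler_pM ?e_t ?lerD ?(p0P n).2 ?(p1P n).2 //.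
by rewrite divr_ge0 ?(ltW (e_pos n)) ?(ltW (t0 n)).
Qed.

Hypothesis eps_gt0 : forall t, 0 < t -> 0 < eps t.
Hypothesis eps_o : forall e, 0 < e ->
  exists2 delta, 0 < delta & forall t, 0 < t < delta -> eps t / t < e.

Lemma relaxed_slope_estimate u (ut : R -> S) M0 q K c e :
  ut @ at_right 0 --> u ->
  (forall t, 0 < t -> (phi_eps (eps t) (ut t) <= M0%:E)%E /\ d (ut t) u <= M0) ->
  0 < q -> q < 1 -> (0 < K)%N ->
  (liminf_right0 (fun t =>
     (phi_eps (eps t) (ut t) - yosida d t (phi_eps (eps t)) (ut t)) * t^-1%:E) < c%:E)%E ->
  0 < e ->
  exists2 a : R, (relaxed_slope d phi u <= a%:E)%E & a ^+ 2 * (q - q ^+ K.+1) <= 2 * c + e.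
Proof.
move=> ut_u ut_bnd q0 q1 K0 Lc e0.
have small_t n : exists2 delta, 0 < delta &
    forall t, 0 < t < delta -> eps t / t < n.+1%:R^-1 /\ t * (8 * B) <= 1.
  have [de de0 deP] : exists2 de, 0 < de & forall t, 0 < t < de -> eps t / t < n.+1%:R^-1.
    by apply: eps_o; rewrite invr_gt0.
  exists (Num.min de (8 * B)^-1); first by rewrite lt_min de0 invr_gt0 mulr_gt0.
  move=> t /andP[t0]; rewrite lt_min => /andP[t_de tB]; split; first by apply: deP; rewrite t0.
  by rewrite -ler_pdivlMr ?mulr_gt0 // mul1r ltW.
have [tn tnP] := liminf_right0_lt_seq _ _ _ Lc small_t.
have t0 n : 0 < tn n by case: (tnP n).
have t_inv n : tn n <= n.+1%:R^-1 by case: (tnP n) => _ /ltW.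
have e_pos n : 0 < eps (tn n) := eps_gt0 _ (t0 n).
have e_t n : eps (tn n) / tn n <= n.+1%:R^-1 by case: (tnP n) => _ _ [/ltW].
have e_inv n : eps (tn n) <= n.+1%:R^-1.
  apply: le_trans (t_inv n); have := e_t n; rewrite ler_pdivrMr // => /le_trans; apply.
  by rewrite ler_piMl ?(ltW (t0 n)) // invf_le1 ?ltr0n // ler1n.
apply: (@relaxed_slope_estimate_seq (ut \o tn) tn (eps \o tn) u M0) => //.
- apply: (cvg_at_right0_seq _ _ _ _ ut_u t0).
  by apply: cvg0_le_invn => n; rewrite t0 t_inv.
- by move=> n; exact: (ut_bnd _ (t0 n)).2.
- by move=> n; case: (tnP n) => _ _ [].
- by move=> n; apply: le_trans (e_inv n) _; rewrite invf_le1 ?ltr0n // ler1n.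
- by apply: cvg0_le_invn => n; rewrite e_pos e_inv.
- by move=> n; exact: (ut_bnd _ (t0 n)).1.
- by move=> n; case: (tnP n).
Qed.

End relaxed_slope_yosida.

Theorem proposition8p1 (R : realType) (S : topologicalType) (d : S -> S -> R)
  (phi : S -> \bar R) (P : R -> S -> \bar R) (eps : R -> R) :
  (* (S,d) complete metric space, sigma Hausdorff and compatible with d *)
  is_metric d -> d_complete d -> hausdorff_space S -> compatible d ->
  (* phi : S -> (-oo,+oo], D(phi) nonempty *)
  (forall x, phi x != -oo%E) -> (exists x, phi x != +oo%E) ->
  (* quadratic lower bound *)
  (exists (A B : R) (ustar : S), [/\ 0 < A, 0 < B &
      forall x, ((- A - B * d x ustar ^+ 2)%:E <= phi x)%E]) ->
  (* sigma lower semicontinuity on d-bounded sequences *)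
  (forall (un : nat -> S) (x : S), d_bounded_seq d un -> sig_cvg un x ->
      (phi x <= limn_einf (fun n => phi (un n)))%E) ->
  (* sigma compactness of sublevels *)
  (forall un : nat -> S,
      (exists M : R, forall n m, d (un n) (un m) <= M /\ (phi (un n) <= M%:E)%E) ->
      exists (h : nat -> nat) (x : S), {homo h : n m / (n < m)%N} /\ sig_cvg (un \o h) x) ->
  (* P_eps : S -> (-oo,+oo], quadratic lower bound *)
  (exists (A B : R) (ustar : S), [/\ 0 < A, 0 < B &
      forall e x, 0 < e -> ((- A - B * d x ustar ^+ 2)%:E <= P e x)%E]) ->
  (forall e x, 0 < e -> P e x != -oo%E) ->
  (* boundedness of P along sigma-convergent d-bounded sequences *)
  (forall (en : nat -> R) (un : nat -> S) (x : S),
      (forall n, 0 < en n) -> en @ \oo --> (0 : R) ->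
      d_bounded_seq d un -> sig_cvg un x ->
      exists M : R, forall n, (`| P (en n) (un n) | <= M%:E)%E) ->
  (* eps(tau) > 0 and eps(tau)/tau -> 0 as tau -> 0+ *)
  (forall t, 0 < t -> 0 < eps t) ->
  (forall e, 0 < e -> exists2 delta, 0 < delta &
      forall t, 0 < t < delta -> eps t / t < e) ->
  let phie := fun (e : R) (x : S) => (phi x + e%:E * P e x)%E in
  forall (u : S) (ut : R -> S),
    (ut @ at_right (0 : R) --> u) ->
    (exists M : R, forall t, 0 < t ->
        (phie (eps t) (ut t) <= M%:E)%E /\ d (ut t) u <= M) ->
    ((2^-1)%:E * (relaxed_slope d phi u * relaxed_slope d phi u)
      <= liminf_right0 (fun t =>
           ((phie (eps t) (ut t) - yosida d t (phie (eps t)) (ut t)) * (t^-1)%:E)))%E.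
Proof.
move=> d_metric _ _ d_compat phi_gtNy _ [A [B [ustar [_ B_gt0 phi_ge]]]] phi_lsc phi_cpt _ _
  P_bnd eps_gt0 eps_o phie u ut ut_u [M0 ut_bnd].
apply: half_sqr_le; first exact: relaxed_slope_ge0.
move=> q K c e q0 q1 K0 Lc e0.
exact: (relaxed_slope_estimate _ _ d_metric phi_gtNy _ _ _ B_gt0 phi_ge phi_lsc phi_cpt
  d_compat _ _ P_bnd eps_gt0 eps_o _ _ _ _ _ _ _ ut_u ut_bnd q0 q1 K0 Lc e0).
Qed.
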